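(* Let $G$ be a simple graph and $S$ a $k$-simplicial set of $G$ such that both $G\setminus S$ and $G\setminus N_G[S]$ are $k$-shellable. Then $G$ is $k$-shellable.
   Context: $N_G(x)$ is the set of neighbours of $x$, $N_G[x]=N_G(x)\cup\{x\}$, $N_G[U]=\bigcup_{x\in U}N_G[x]$; $G\setminus U$ deletes the vertices of $U$ and incident edges; $G_U$ is the induced subgraph on $U$. A set $S$ of pairwise non-adjacent vertices of $G$ is a $k$-simplicial set if $G_{N_G[S]}$ is a complete $r$-partite graph (for some $r$) with $k$-element parts $S_1,\ldots,S_r$ such that for every part $S_l$ and every two vertices $x_i,x_j\in S_l$, $N_G(x_i)=N_G(x_j)$. A graph $H$ is $k$-shellable if its independence complex $\Delta_H$ (faces: sets of pairwise non-adjacent vertices) is. $\langle F_1,\ldots,F_s\rangle$ denotes the complex with facets $F_1,\dots,F_s$. A complex $\Gamma$ of dimension $d$ is $k$-shellable ($1\le k\le d+1$) if its facets can be ordered $F_1,\ldots,F_r$ such that for every $j=2,\ldots,r$, $\Gamma_j=\langle F_j\rangle\cap\langle F_1,\ldots,F_{j-1}\rangle$ satisfies (i) $\Gamma_j$ is generated by a nonempty set of faces of $\langle F_j\rangle$ of dimension $|F_j|-k-1$; (ii) if $\Gamma_j$ has more than one facet, then for every two distinct facets $\sigma,\tau$ of $\Gamma_j$, $F_j\subseteq\sigma\cup\tau$. *)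

From mathcomp Require Import all_boot.
Set Implicit Arguments. Unset Strict Implicit. Unset Printing Implicit Defensive.

Section Defs.
Variable T : finType.

(* A simple graph on the vertex set T is a symmetric irreflexive e : rel T. *)

Definition closedN (e : rel T) (U : {set T}) : {set T} :=
  U :|: [set y | [exists x in U, e x y]].

Definition independent (e : rel T) (A : {set T}) : bool :=
  [forall x in A, forall y in A, ~~ e x y].

(* independence complex of G \ U (faces = independent sets avoiding U) *)
Definition indcomplex (e : rel T) (U : {set T}) : {set {set T}} :=
  [set s : {set T} | (s \subset ~: U) && independent e s].

(* a simplicial complex is represented by its set of faces *)
Definition facets (D : {set {set T}}) : {set {set T}} :=
  [set F in D | [forall H in D, (F \subset H) ==> (H == F)]].

Definition gen (E : {set {set T}}) : {set {set T}} :=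
  [set s : {set T} | [exists F in E, s \subset F]].

(* k-shellable complex (facet sizes; dimension d = max facet size - 1) *)
Definition kshellable (k : nat) (D : {set {set T}}) : Prop :=
  (0 < k) /\ (k <= \max_(F in facets D) #|F|) /\
  exists s : seq {set T},
    uniq s /\ [set F in s] = facets D /\
    forall j, 0 < j < size s ->
      let F := nth set0 s j in
      let Gm := gen [set F] :&: gen [set H in take j s] in
      (exists E : {set {set T}}, E != set0 /\
         (forall sg, sg \in E -> sg \subset F /\ #|sg| + k = #|F|) /\
         Gm = gen E) /\
      (forall sg tau, sg \in facets Gm -> tau \in facets Gm -> sg != tau ->
         F \subset sg :|: tau).

Definition ksimplicial (e : rel T) (k : nat) (S : {set T}) : Prop :=
  independent e S /\
  exists P : {set {set T}},
    partition P (closedN e S) /\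
    (forall B, B \in P -> #|B| = k) /\
    (forall x y, x \in closedN e S -> y \in closedN e S ->
       e x y = (pblock P x != pblock P y)) /\
    (forall B x y, B \in P -> x \in B -> y \in B ->
       forall z, e x z = e y z).

End Defs.

From mathcomp Require Import all_boot.
Set Implicit Arguments. Unset Strict Implicit. Unset Printing Implicit Defensive.

(* The facets of the independence complex of G are of two kinds: S :|: H for H a
   facet of the complex of G \ N[S], and the facets of the complex of G \ S that
   meet N[S].  Since S is itself a block of the partition of N[S], a facet of the
   second kind meets N[S] in exactly one block, of size k.  Shell first the facets
   S :|: H, in the order of a shelling of G \ N[S] (coning with S preserves every
   step), then the facets of the second kind, in the order inherited from a
   shelling of G \ S.  For such a facet F, the earlier facets add to the old
   restriction exactly the faces of F :\: N[S], which has codimension k; and a face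
   of the old restriction either misses N[S], and then equals F :\: N[S], or
   contains the block F :&: N[S], so the covering condition survives. *)

Lemma nth_filter_take (U : eqType) (p : pred U) (s : seq U) j x0 :
  j < size (filter p s) ->
  exists q, [/\ q < size s, nth x0 (filter p s) j = nth x0 s q, p (nth x0 s q)
             & take j (filter p s) = filter p (take q s)].
Proof.
elim: s j => [|x s IHs] j //=; case px: (p x) => /=; last first.
  by move=> /IHs[q [qs eq_nth pq eq_take]]; exists q.+1; rewrite /= px eq_take.
case: j => [|j] /=; first by exists 0; rewrite px.
by move=> /IHs[q [qs eq_nth pq eq_take]]; exists q.+1; rewrite /= px eq_take.
Qed.

Lemma notin_subsetC (T : finType) (A U : {set T}) x : A \subset ~: U -> x \in A -> x \notin U.
Proof. by move=> AU /(subsetP AU); rewrite inE. Qed.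

Section Complexes.
Variable T : finType.
Implicit Types (D E : {set {set T}}) (A F H S X Y Z t sg tau : {set T}) (L : seq {set T}).

Lemma facetsP D F :
  reflect (F \in D /\ forall H, H \in D -> F \subset H -> H = F) (F \in facets D).
Proof.
rewrite inE; apply: (iffP andP) => [[FD /forall_inP maxF]|[FD maxF]]; split => //.
  by move=> H HD FH; apply/eqP; exact: (implyP (maxF H HD)).
by apply/forall_inP => H HD; apply/implyP => /(maxF H HD)->.
Qed.

Lemma exists_facet D A : A \in D -> exists2 F, F \in facets D & A \subset F.
Proof.
move=> AD; have [F /maxsetP[FD maxF] AF] := maxset_exists (P := mem D) AD.
by exists F => //; apply/facetsP.
Qed.

Lemma genP E t : reflect (exists2 F, F \in E & t \subset F) (t \in gen E).
Proof. by rewrite inE; apply: (iffP exists_inP) => -[F]; exists F. Qed.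

Lemma mem_gen E F : F \in E -> F \in gen E.
Proof. by move=> FE; apply/genP; exists F. Qed.

Lemma gen_set1 F t : (t \in gen [set F]) = (t \subset F).
Proof.
apply/genP/idP => [[G /set1P->]//|tF].
by exists F; rewrite ?set11.
Qed.

Lemma gen_setU1 E X t : (t \in gen (X |: E)) = (t \subset X) || (t \in gen E).
Proof.
apply/genP/orP => [[Y /setU1P[->|YE] tY]|[tX|/genP[Y YE tY]]]; first by left.
- by right; apply/genP; exists Y.
- by exists X; rewrite ?setU11.
- by exists Y; rewrite ?setU1r.
Qed.

Lemma facets_gen_uniform E m : {in E, forall X, #|X| = m} -> facets (gen E) = E.
Proof.
move=> cardE; apply/setP => X; apply/facetsP/idP => [[/genP[Y YE XY] maxX]|XE].
  by rewrite -(maxX Y (mem_gen YE) XY).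
split=> [|H /genP[Y YE HY] XH]; first exact: mem_gen.
have /eqP XY : X == Y.
  by rewrite eqEcard (subset_trans XH HY) (cardE _ XE) (cardE _ YE) /=.
by apply/eqP; rewrite eqEsubset XH andbT XY.
Qed.

Definition shell_meet F L : {set {set T}} := gen [set F] :&: gen [set H in L].

Lemma shell_meetP F L t :
  reflect (t \subset F /\ exists2 Z, Z \in L & t \subset Z) (t \in shell_meet F L).
Proof.
rewrite in_setI gen_set1; apply: (iffP andP) => [[tF /genP[Z]]|[tF [Z ZL tZ]]].
  by rewrite inE => ZL tZ; split => //; exists Z.
by split => //; apply/genP; exists Z; rewrite ?inE.
Qed.

Definition shelling_step k F L : Prop :=
  (exists E, E != set0 /\ (forall sg, sg \in E -> sg \subset F /\ #|sg| + k = #|F|) /\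
             shell_meet F L = gen E) /\
  (forall sg tau, sg \in facets (shell_meet F L) -> tau \in facets (shell_meet F L) ->
     sg != tau -> F \subset sg :|: tau).

Definition shelling_witness k F L E : Prop :=
  [/\ E != set0, {in E, forall sg, sg \subset F /\ #|sg| + k = #|F|},
      shell_meet F L = gen E &
      {in E &, forall sg tau, sg != tau -> F \subset sg :|: tau}].

Lemma shelling_stepP k F L : shelling_step k F L <-> exists E, shelling_witness k F L E.
Proof.
have facetsE E : {in E, forall sg, sg \subset F /\ #|sg| + k = #|F|} -> facets (gen E) = E.
  by move=> cardE; apply: (@facets_gen_uniform _ (#|F| - k)) => X /cardE[_ <-]; rewrite addnK.
split=> [[[E [E0 [cardE meetE]]] cover] | [E [E0 cardE meetE cover]]].
  by exists E; split=> //; move: cover; rewrite meetE facetsE.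
by split; [exists E | rewrite meetE facetsE].
Qed.

Lemma kshellableP k D : kshellable k D <->
  [/\ 0 < k, k <= \max_(F in facets D) #|F| &
      exists s, [/\ uniq s, [set F in s] = facets D &
        forall j, 0 < j < size s -> shelling_step k (nth set0 s j) (take j s)]].
Proof.
split=> [[k0 [kmax [s [us [fs steps]]]]] | [k0 kmax [s [us fs steps]]]].
  by split=> //; exists s.
by do 2!split=> //; exists s.
Qed.

Lemma shelling_step_setU k S H L : [disjoint S & H] -> shelling_step k H L ->
  shelling_step k (S :|: H) (map (setU S) L).
Proof.
move=> SH /shelling_stepP[E [E0 cardE meetE cover]]; apply/shelling_stepP.
exists (setU S @: E); split.
- by rewrite imset_eq0.
- move=> _ /imsetP[sg sgE ->]; have [sgH card_sg] := cardE _ sgE.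
  have cardSU Y : Y \subset H -> #|S :|: Y| = #|S| + #|Y|.
    by move=> YH; apply/eqP; rewrite (leq_card_setU S Y).2 (disjointWr YH).
  by rewrite setUS // !cardSU // -addnA card_sg.
- apply/setP => t; apply/shell_meetP/genP => [[tSH [_ /mapP[H' H'L ->] tSH']]|].
    have : t :\: S \in gen E.
      by rewrite -meetE; apply/shell_meetP; split; [|exists H']; rewrite // subDset.
    by case/genP => sg sgE tsg; exists (S :|: sg); [exact: imset_f | rewrite -subDset].
  move=> [_ /imsetP[sg sgE ->] tsg].
  have /shell_meetP[sgH [H' H'L sgH']] : sg \in shell_meet H L by rewrite meetE mem_gen.
  split; first exact: subset_trans tsg (setUS _ sgH).
  by exists (S :|: H'); [exact: map_f | exact: subset_trans tsg (setUS _ sgH')].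
- move=> _ _ /imsetP[sg sgE ->] /imsetP[tau tauE ->] neq.
  have /(cover _ _ sgE tauE) cover_H : sg != tau by apply: contraNneq neq => ->.
  by rewrite setUACA setUid setUS.
Qed.

End Complexes.

Section Independence.
Variables (T : finType) (e : rel T).
Implicit Types (A B U : {set T}).

Lemma independentP A : reflect {in A &, forall x y, ~~ e x y} (independent e A).
Proof.
apply: (iffP forall_inP) => [indA x y xA yA | indA x xA].
  by move/forall_inP: (indA x xA); apply.
by apply/forall_inP => y yA; apply: indA.
Qed.

Lemma independent_nonedge A x y : independent e A -> x \in A -> y \in A -> ~~ e x y.
Proof. by move/independentP; apply. Qed.

Lemma independentS A B : A \subset B -> independent e B -> independent e A.
Proof.
move=> AB /independentP indB; apply/independentP => x y xA yA.
by apply: indB; apply: (subsetP AB).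
Qed.

Lemma independentU1 (esym : symmetric e) (eirr : irreflexive e) A z :
  independent e A -> {in A, forall w, ~~ e z w} -> independent e (z |: A).
Proof.
move=> /independentP indA zA; apply/independentP => x y.
case/setU1P=> [->|xA]; case/setU1P=> [->|yA].
- by rewrite eirr.
- exact: zA.
- by rewrite esym; apply: zA.
- exact: indA.
Qed.

Lemma in_indcomplex U A : (A \in indcomplex e U) = (A \subset ~: U) && independent e A.
Proof. by rewrite inE. Qed.

Lemma in_indcomplex0 A : (A \in indcomplex e set0) = independent e A.
Proof. by rewrite in_indcomplex setC0 subsetT. Qed.

Lemma facet_indcomplex_subsetC U F : F \in facets (indcomplex e U) -> F \subset ~: U.
Proof. by case/facetsP; rewrite in_indcomplex => /andP[]. Qed.

Lemma closedNP U x :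
  reflect (x \in U \/ exists2 y, y \in U & e y x) (x \in closedN e U).
Proof.
rewrite !inE; apply: (iffP orP) => -[->|]; [by left | | by left |].
  by move/exists_inP=> [y yU eyx]; right; exists y.
by move=> [y yU eyx]; right; apply/exists_inP; exists y.
Qed.

Lemma subset_closedN U : U \subset closedN e U.
Proof. exact: subsetUl. Qed.

Lemma closedN_edge U x y : y \in U -> e y x -> x \in closedN e U.
Proof. by move=> yU eyx; apply/closedNP; right; exists y. Qed.

End Independence.

Section SimplicialSet.
Variables (T : finType) (e : rel T) (esym : symmetric e) (eirr : irreflexive e).
Variables (k : nat) (S : {set T}) (P : {set {set T}}).
Implicit Types (F H K Z t : {set T}) (L : seq {set T}).
Local Notation N := (closedN e S).
Hypothesis S_indep : independent e S.
Hypothesis P_partition : partition P N.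
Hypothesis P_card : forall B, B \in P -> #|B| = k.
Hypothesis P_edge : forall x y, x \in N -> y \in N -> e x y = (pblock P x != pblock P y).
Hypothesis P_twins : forall B x y, B \in P -> x \in B -> y \in B -> forall z, e x z = e y z.

Lemma cover_partition : cover P = N.
Proof. by case/and3P: P_partition => /eqP. Qed.

Lemma trivIset_partition : trivIset P.
Proof. by case/and3P: P_partition. Qed.

Lemma mem_pblock_closedN x : x \in N -> x \in pblock P x.
Proof. by rewrite mem_pblock cover_partition. Qed.

Lemma pblock_closedN_mem x : x \in N -> pblock P x \in P.
Proof. by move=> xN; rewrite pblock_mem ?cover_partition. Qed.

Lemma closedN_pblock x y : y \in pblock P x -> y \in N.
Proof.
by move=> yx; rewrite -cover_partition -mem_pblock (same_pblock trivIset_partition yx).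
Qed.

Lemma nonedge_pblock x y : x \in N -> y \in N -> ~~ e x y = (y \in pblock P x).
Proof.
by move=> xN yN; rewrite P_edge // negbK eq_pblock ?cover_partition ?trivIset_partition.
Qed.

Lemma S_closedN s : s \in S -> s \in N.
Proof. exact/subsetP/subset_closedN. Qed.

Lemma edge_S_closedN s x : s \in S -> x \in N -> x \notin S -> e s x.
Proof.
move=> sS xN xNS; case/closedNP: (xN) => [xS|[s' s'S es'x]]; first by rewrite xS in xNS.
have s's : s' \in pblock P s by rewrite -nonedge_pblock ?S_closedN ?(independent_nonedge S_indep).
have [sN s'N] := (S_closedN sS, S_closedN s'S).
by rewrite P_edge // -(same_pblock trivIset_partition s's) -P_edge.
Qed.

Lemma pblock_S s : s \in S -> pblock P s = S.
Proof.
move=> sS; have sN := S_closedN sS; apply/setP => z; apply/idP/idP => [zs|zS].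
  have zN := closedN_pblock zs; apply: contraLR zs => zNS.
  by rewrite -nonedge_pblock // negbK edge_S_closedN.
by rewrite -nonedge_pblock ?S_closedN ?(independent_nonedge S_indep).
Qed.

Lemma card_S : S != set0 -> #|S| = k.
Proof.
by case/set0Pn => s sS; rewrite -(pblock_S sS) P_card ?pblock_closedN_mem ?S_closedN.
Qed.

Lemma facet_indcomplexS_pblock F y : F \in facets (indcomplex e S) -> y \in F -> y \in N ->
  F :&: N = pblock P y.
Proof.
case/facetsP => FD maxF yF yN; move: (FD); rewrite in_indcomplex => /andP[FS indF].
apply/setP => z; rewrite inE; apply/andP/idP => [[zF zN]|zy].
  by rewrite -nonedge_pblock // (independent_nonedge indF).
have zN := closedN_pblock zy; split=> //.
have zNS : z \notin S.
  apply: contraNN (notin_subsetC FS yF) => zS.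
  by rewrite -(pblock_S zS) (same_pblock trivIset_partition zy) mem_pblock_closedN.
have zFD : z |: F \in indcomplex e S.
  rewrite in_indcomplex subUset sub1set inE zNS FS independentU1 // => w wF.
  rewrite (P_twins (pblock_closedN_mem yN) zy (mem_pblock_closedN yN)).
  exact: (independent_nonedge indF yF).
by rewrite -(maxF _ zFD (subsetUr _ _)) setU11.
Qed.

Lemma facet_indcomplexS_facet0 F y : F \in facets (indcomplex e S) -> y \in F -> y \in N ->
  F \in facets (indcomplex e set0).
Proof.
case/facetsP => FD maxF yF yN; move: (FD); rewrite in_indcomplex => /andP[FS indF].
apply/facetsP; split=> [|K]; first by rewrite in_indcomplex0.
rewrite in_indcomplex0 => indK FK; apply: maxF => //; rewrite in_indcomplex indK andbT.
apply/subsetP => s sK; rewrite inE; apply: contraTN isT => sS.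
have := independent_nonedge indK sK (subsetP FK y yF).
by rewrite edge_S_closedN // (notin_subsetC FS yF).
Qed.

Lemma independent_setU_S H : H \subset ~: N -> independent e H -> independent e (S :|: H).
Proof.
move=> HN /independentP indH.
have SH s h : s \in S -> h \in H -> ~~ e s h.
  by move=> sS hH; apply: contra (notin_subsetC HN hH); apply: closedN_edge.
apply/independentP => x y /setUP[xS|xH] /setUP[yS|yH].
- exact: independent_nonedge S_indep xS yS.
- exact: SH xS yH.
- by rewrite esym SH.
- exact: indH.
Qed.

Lemma facet_setU_S H : S != set0 -> H \in facets (indcomplex e N) ->
  S :|: H \in facets (indcomplex e set0).
Proof.
move=> /set0Pn[s sS] /facetsP[HD maxH]; move: (HD); rewrite in_indcomplex => /andP[HN indH].
apply/facetsP; split=> [|K]; first by rewrite in_indcomplex0 independent_setU_S.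
rewrite in_indcomplex0 => indK SHK.
have KD : K :\: N \in indcomplex e N.
  by rewrite in_indcomplex subsetDr (independentS (subsetDl _ _)).
have HK : H \subset K :\: N.
  by rewrite subsetD (subset_trans (subsetUr S H) SHK) disjoints_subset.
apply/eqP; rewrite eqEsubset SHK andbT; apply/subsetP => z zK.
have [zN|zNN] := boolP (z \in N); last by rewrite -(maxH _ KD HK) in_setU in_setD zNN zK orbT.
rewrite in_setU; have [//|zNS] := boolP (z \in S).
have sK : s \in K by rewrite (subsetP SHK) // in_setU sS.
by have := independent_nonedge indK sK zK; rewrite edge_S_closedN.
Qed.

Lemma facet_meet_S_eq F s : F \in facets (indcomplex e set0) -> s \in S -> s \in F ->
  F = S :|: (F :\: N).
Proof.
case/facetsP; rewrite in_indcomplex0 => indF maxF sS sF.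
have sNF z : z \in N -> z \notin S -> z \notin F.
  move=> zN zNS; apply: contraTN (edge_S_closedN sS zN zNS) => zF.
  exact: independent_nonedge indF sF zF.
have SF : S \subset F.
  apply/subsetP => s' s'S.
  have s'FD : s' |: F \in indcomplex e set0.
    rewrite in_indcomplex0 independentU1 // => w wF; apply: contraTN wF => es'w.
    exact: sNF (closedN_edge s'S es'w) (contraL (independent_nonedge S_indep s'S) es'w).
  by rewrite -(maxF _ s'FD (subsetUr _ _)) setU11.
apply/eqP; rewrite eqEsubset subUset SF subsetDl !andbT; apply/subsetP => z zF.
apply/setUP; have [zN|zNN] := boolP (z \in N); last by right; apply/setDP.
by left; apply: contraTT zF => zNS; rewrite sNF.
Qed.

Lemma facet_meet_S_setD F s : F \in facets (indcomplex e set0) -> s \in S -> s \in F ->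
  F :\: N \in facets (indcomplex e N).
Proof.
move=> Ff sS sF; have eqF := facet_meet_S_eq Ff sS sF; case/facetsP: Ff => FD maxF.
apply/facetsP; split=> [|K KD FK].
  by rewrite in_indcomplex subsetDr (independentS (subsetDl _ _)) -?in_indcomplex0.
move: (KD); rewrite in_indcomplex => /andP[KN indK].
have SKD : S :|: K \in indcomplex e set0 by rewrite in_indcomplex0 independent_setU_S.
have eqSK : S :|: K = F by apply: maxF SKD _; rewrite {1}eqF setUS.
apply/eqP; rewrite eqEsubset FK andbT; apply/subsetP => z zK.
by rewrite inE (notin_subsetC KN zK) -eqSK inE zK orbT.
Qed.

Lemma facet_avoid_S F : S != set0 -> F \in facets (indcomplex e set0) -> F \subset ~: S ->
  F \in facets (indcomplex e S) /\ exists2 y, y \in F & y \in N.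
Proof.
move=> /set0Pn[s sS] /facetsP[FD maxF] FS; move: (FD); rewrite in_indcomplex0 => indF.
split.
  apply/facetsP; split=> [|K]; first by rewrite in_indcomplex FS.
  by rewrite in_indcomplex => /andP[_ indK]; apply: maxF; rewrite in_indcomplex0.
apply/exists_inP; apply: contraTT isT => /exists_inPn FN.
have sFD : s |: F \in indcomplex e set0.
  rewrite in_indcomplex0 independentU1 // => w wF.
  by apply: contra (FN w wF); apply: closedN_edge.
have sF : s \in F by rewrite -(maxF _ sFD (subsetUr _ _)) setU11.
by have := notin_subsetC FS sF; rewrite sS.
Qed.

Lemma disjoint_S_facet_closedN H : H \in facets (indcomplex e N) -> [disjoint S & H].
Proof.
move/facet_indcomplex_subsetC => HN; rewrite disjoints_subset subsetC.
by rewrite (subset_trans HN) // setCS subset_closedN.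
Qed.

Section StepAvoidingS.
Variables (F : {set T}) (L A : seq {set T}).
Hypothesis F_facet : F \in facets (indcomplex e S).
Hypothesis F_meets_N : exists2 y, y \in F & y \in N.
Hypothesis L_facets : {subset L <= facets (indcomplex e S)}.
Hypothesis A_meet_N : {in A, forall Z, Z :&: N \subset S}.
Hypothesis A_cover : exists2 Z, Z \in A & F :\: N \subset Z.
Local Notation X := (F :\: N).
Local Notation LG := (filter (mem (facets (indcomplex e set0))) L).

Lemma card_facet_setD_closedN : #|X| + k = #|F|.
Proof.
have [y yF yN] := F_meets_N; rewrite -(P_card (pblock_closedN_mem yN)).
by rewrite -(facet_indcomplexS_pblock F_facet yF yN) addnC cardsID.
Qed.

Lemma shell_meet_avoid_S t :
  (t \in shell_meet F (A ++ LG)) = (t \subset X) || (t \in shell_meet F L).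
Proof.
have FS := facet_indcomplex_subsetC F_facet.
have meetX : t \subset X -> t \in shell_meet F (A ++ LG).
  move=> tX; have [Z ZA XZ] := A_cover; apply/shell_meetP.
  split; first exact: subset_trans tX (subsetDl F N).
  by exists Z; rewrite ?mem_cat ?ZA // (subset_trans tX XZ).
apply/idP/orP => [/shell_meetP[tF [Z]]|[/meetX//|/shell_meetP[tF [Z ZL tZ]]]].
  rewrite mem_cat mem_filter => /orP[ZA tZ|/andP[_ ZL] tZ]; last first.
    by right; apply/shell_meetP; split=> //; exists Z.
  left; apply/subsetP => z zt; have zF := subsetP tF z zt.
  rewrite in_setD zF andbT; apply: (contra _ (notin_subsetC FS zF)) => zN.
  by apply: (subsetP (A_meet_N ZA)); rewrite in_setI (subsetP tZ z zt).
have [ZG|ZnG] := boolP (Z \in facets (indcomplex e set0)).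
  apply/shell_meetP; split=> //; exists Z => //.
  by rewrite mem_cat mem_filter ZL andbT; apply/orP; right.
apply: meetX; apply/subsetP => z zt; rewrite in_setD (subsetP tF z zt) andbT.
by apply: contra ZnG; apply: facet_indcomplexS_facet0 (L_facets ZL) (subsetP tZ z zt).
Qed.

(* A face of the old restriction that meets N contains the whole block F :&: N;
   one that misses N is X itself. *)
Lemma shelling_witness_avoid_S E tau : shelling_witness k F L E -> tau \in E -> tau != X ->
  F \subset X :|: tau.
Proof.
case=> _ cardE meetE _ tauE tauX; have [tauF card_tau] := cardE _ tauE.
have /shell_meetP[_ [Z ZL tauZ]] : tau \in shell_meet F L by rewrite meetE mem_gen.
have [/exists_inP[z ztau zN]|/exists_inPn tauN] := boolP [exists z in tau, z \in N].
  have eqFZ : F :&: N = Z :&: N.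
    rewrite (facet_indcomplexS_pblock F_facet (subsetP tauF z ztau) zN).
    by rewrite (facet_indcomplexS_pblock (L_facets ZL) (subsetP tauZ z ztau) zN).
  have : tau :|: (F :&: N) \in gen E.
    rewrite -meetE; apply/shell_meetP; split; first by rewrite subUset tauF subsetIl.
    by exists Z; rewrite // subUset tauZ eqFZ subsetIl.
  case/genP => sg sgE tau_sg; have [_ card_sg] := cardE _ sgE.
  have eq_card : #|sg| = #|tau| by apply/eqP; rewrite -(eqn_add2r k) card_sg card_tau.
  have /eqP eq_tau : tau == tau :|: (F :&: N).
    by rewrite eqEcard subsetUl -eq_card subset_leq_card.
  have FN_tau : F :&: N \subset tau by rewrite eq_tau subsetUr.
  rewrite -{1}(setID F N) subUset subsetUl andbT.
  exact: subset_trans FN_tau (subsetUr _ _).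
have tau_X : tau \subset X.
  by apply/subsetP => z ztau; rewrite in_setD (subsetP tauF z ztau) tauN.
suff /eqP eq_tauX : tau == X by rewrite eq_tauX eqxx in tauX.
by rewrite eqEcard tau_X -(leq_add2r k) card_facet_setD_closedN card_tau /=.
Qed.

Lemma shelling_step_avoid_S : L = [::] \/ shelling_step k F L ->
  shelling_step k F (A ++ LG).
Proof.
have XF := subsetDl F N.
move=> [L0|/shelling_stepP[E1 wE1]]; apply/shelling_stepP.
  exists [set X]; split.
  - by apply/set0Pn; exists X; rewrite set11.
  - by move=> _ /set1P->; rewrite XF card_facet_setD_closedN.
  - apply/setP => t; rewrite shell_meet_avoid_S gen_set1 L0 orbC.
    by case: shell_meetP => // -[_ []].
  - by move=> _ _ /set1P-> /set1P->; rewrite eqxx.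
exists (X |: E1); have [E10 cardE1 meetE1 coverE1] := wE1; split.
- by apply/set0Pn; exists X; rewrite setU11.
- by move=> sg /setU1P[->|/cardE1//]; rewrite XF card_facet_setD_closedN.
- by apply/setP => t; rewrite shell_meet_avoid_S meetE1 gen_setU1.
- move=> sg tau /setU1P[->|sgE] /setU1P[->|tauE] neq.
  + by rewrite eqxx in neq.
  + by apply: shelling_witness_avoid_S wE1 tauE _; rewrite eq_sym.
  + by rewrite setUC; apply: shelling_witness_avoid_S wE1 sgE neq.
  + exact: coverE1.
Qed.

End StepAvoidingS.

Section Shelling.
Variables s0 s1 : seq {set T}.
Hypothesis S_neq0 : S != set0.
Hypotheses (s0_uniq : uniq s0) (s1_uniq : uniq s1).
Hypothesis s0_facets : [set H in s0] = facets (indcomplex e N).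
Hypothesis s1_facets : [set H in s1] = facets (indcomplex e S).
Hypothesis s0_steps :
  forall j, 0 < j < size s0 -> shelling_step k (nth set0 s0 j) (take j s0).
Hypothesis s1_steps :
  forall j, 0 < j < size s1 -> shelling_step k (nth set0 s1 j) (take j s1).
Local Notation sA := (map (setU S) s0).
Local Notation sB := (filter (mem (facets (indcomplex e set0))) s1).

Lemma mem_s0 H : (H \in s0) = (H \in facets (indcomplex e N)).
Proof. by rewrite -s0_facets inE. Qed.

Lemma mem_s1 H : (H \in s1) = (H \in facets (indcomplex e S)).
Proof. by rewrite -s1_facets inE. Qed.

Lemma uniq_shelling : uniq (sA ++ sB).
Proof.
rewrite cat_uniq filter_uniq // andbT; apply/andP; split.
  rewrite map_inj_in_uniq // => H H' Hs H's eqSH.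
  have SHK Y : Y \in s0 -> (S :|: Y) :\: S = Y.
    rewrite mem_s0 setDUl setDv set0U => /disjoint_S_facet_closedN.
    by rewrite disjoint_sym => /setDidPl.
  by rewrite -(SHK H Hs) eqSH SHK.
apply/hasPn => F; rewrite mem_filter => /andP[_ /[!mem_s1] /facet_indcomplex_subsetC FS].
apply/mapP => -[H _ eqF]; have /set0Pn[s sS] := S_neq0.
have sF : s \in F by rewrite eqF in_setU sS.
by have := notin_subsetC FS sF; rewrite sS.
Qed.

Lemma facets_shelling : [set F in sA ++ sB] = facets (indcomplex e set0).
Proof.
apply/setP => F; rewrite inE mem_cat mem_filter; apply/idP/idP.
  by case/orP=> [/mapP[H /[!mem_s0] Hf ->]|/andP[]//]; apply: facet_setU_S.
move=> FG; have [/exists_inP[s sS sF]|/exists_inPn FS] := boolP [exists s in S, s \in F].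
  by rewrite (facet_meet_S_eq FG sS sF) map_f // mem_s0 (facet_meet_S_setD FG sS sF).
have FSC : F \subset ~: S by rewrite subsetC; apply/subsetP => s /FS; rewrite inE.
have [F1 _] := facet_avoid_S S_neq0 FG FSC.
by rewrite mem_s1 F1 andbT; apply/orP; right.
Qed.

Lemma shelling_steps j : 0 < j < size (sA ++ sB) ->
  shelling_step k (nth set0 (sA ++ sB) j) (take j (sA ++ sB)).
Proof.
move=> /andP[j0 js]; rewrite nth_cat take_cat size_map; case: ltnP => [jA|jA].
  rewrite (nth_map set0) // -map_take; apply: shelling_step_setU.
    by apply: disjoint_S_facet_closedN; rewrite -mem_s0 mem_nth.
  by apply: s0_steps; rewrite j0 jA.
have jB : j - size s0 < size sB by rewrite ltn_subLR // -(size_map (setU S)) -size_cat.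
have [q [qs -> FG ->]] := nth_filter_take set0 jB; set F := nth set0 s1 q.
have F1 : F \in facets (indcomplex e S) by rewrite -mem_s1 mem_nth.
have [_ FN] := facet_avoid_S S_neq0 FG (facet_indcomplex_subsetC F1).
apply: shelling_step_avoid_S => //.
- by move=> Z /mem_take; rewrite mem_s1.
- move=> _ /mapP[H /[!mem_s0] /facet_indcomplex_subsetC HN ->].
  apply/subsetP => z; rewrite in_setI in_setU => /andP[/orP[//|zH] zN].
  by have := notin_subsetC HN zH; rewrite zN.
- have indF : independent e F by case/facetsP: F1; rewrite in_indcomplex => /andP[].
  have XD : F :\: N \in indcomplex e N.
    by rewrite in_indcomplex subsetDr (independentS (subsetDl _ _)).
  have [H Hf XH] := exists_facet XD.
  by exists (S :|: H); [rewrite map_f // mem_s0 | exact: subset_trans XH (subsetUr _ _)].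
- by case: (posnP q) => [->|q0]; [left; rewrite take0 | right; apply: s1_steps; rewrite q0].
Qed.

End Shelling.

Lemma kshellable_indcomplex_simplicial : S != set0 ->
  kshellable k (indcomplex e S) -> kshellable k (indcomplex e N) ->
  kshellable k (indcomplex e set0).
Proof.
move=> S0 /kshellableP[k0 _ [s1 [u1 f1 st1]]] /kshellableP[_ _ [s0 [u0 f0 st0]]].
apply/kshellableP; split=> //.
  have [H Hf _] : exists2 H, H \in facets (indcomplex e N) & set0 \subset H.
    by apply: exists_facet; rewrite in_indcomplex sub0set; apply/independentP => x; rewrite inE.
  rewrite -(card_S S0); apply: leq_trans (subset_leq_card (subsetUl S H)) _.
  exact: leq_bigmax_cond (facet_setU_S S0 Hf).
exists (map (setU S) s0 ++ filter (mem (facets (indcomplex e set0))) s1); split.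
- exact: uniq_shelling.
- exact: facets_shelling.
- exact: shelling_steps.
Qed.

End SimplicialSet.

Theorem theorem4p6 (T : finType) (e : rel T)
  (esym : symmetric e) (eirr : irreflexive e) (k : nat) (S : {set T}) :
  ksimplicial e k S ->
  kshellable k (indcomplex e S) ->
  kshellable k (indcomplex e (closedN e S)) ->
  kshellable k (indcomplex e set0).
Proof.
move=> [S_indep [P [P_partition [P_card [P_edge P_twins]]]]].
have [->|S_neq0] := eqVneq S set0; first by move=> ? _.
exact: (kshellable_indcomplex_simplicial esym eirr S_indep P_partition P_card P_edge P_twins
  S_neq0).
Qed.
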